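(* Assume $r<n$. Then for every solution of system (S) with initial condition in $\mathcal{D}^0$, the total mite population $M(t)+N(t)$ tends to $0$ as $t\to+\infty$.
   Context: All parameters $b,\lambda,\gamma,m,\mu,r,n,p,h,\beta,\delta,e$ are positive constants. Here $B,I$ denote healthy and infected bees and $M,N$ healthy and infected mites. The model (S) is $$B'=\frac{bB}{B+I}-\lambda BN-\gamma BI-mB,\qquad I'=\frac{bI}{B+I}+\lambda BN+\gamma BI-(m+\mu)I,$$ $$M'=r(M+N)-nM-\frac{p}{h(B+I)}M(M+N)-M(\beta I+\delta N+eB),$$ $$N'=-nN-\frac{p}{h(B+I)}N(M+N)+\beta MI+\delta MN-eNB,$$ considered on the domain $\mathcal{D}^0=\{(B,I,M,N)\in\mathbb{R}^4_+ : B+I\neq 0\}$, where $\mathbb{R}_+=[0,\infty)$. *)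

From Stdlib Require Import Reals Lra.
Open Scope R_scope.

Definition fB (b lam gam m : R) (B I M N : R) : R :=
  b * B / (B + I) - lam * B * N - gam * B * I - m * B.

Definition fI (b lam gam m mu : R) (B I M N : R) : R :=
  b * I / (B + I) + lam * B * N + gam * B * I - (m + mu) * I.

Definition fM (r n p h beta delta e : R) (B I M N : R) : R :=
  r * (M + N) - n * M - p / (h * (B + I)) * M * (M + N)
  - M * (beta * I + delta * N + e * B).

Definition fN (n p h beta delta e : R) (B I M N : R) : R :=
  - n * N - p / (h * (B + I)) * N * (M + N) + beta * M * I + delta * M * N
  - e * N * B.

Definition in_D0 (B I M N : R) : Prop :=
  0 <= B /\ 0 <= I /\ 0 <= M /\ 0 <= N /\ B + I <> 0.

Definition right_cont0 (f : R -> R) : Prop :=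
  forall eps, 0 < eps -> exists delta, 0 < delta /\
    forall t, 0 <= t < delta -> Rabs (f t - f 0) < eps.

Definition is_solution_S (b lam gam m mu r n p h beta delta e : R)
  (B I M N : R -> R) : Prop :=
  (forall t, 0 <= t -> B t + I t <> 0) /\
  (forall t, 0 < t ->
     derivable_pt_lim B t (fB b lam gam m (B t) (I t) (M t) (N t)) /\
     derivable_pt_lim I t (fI b lam gam m mu (B t) (I t) (M t) (N t)) /\
     derivable_pt_lim M t (fM r n p h beta delta e (B t) (I t) (M t) (N t)) /\
     derivable_pt_lim N t (fN n p h beta delta e (B t) (I t) (M t) (N t))) /\
  right_cont0 B /\ right_cont0 I /\ right_cont0 M /\ right_cont0 N.

From Stdlib Require Import Reals Lra.
Open Scope R_scope.

(* The total mite population S = M + N solves the scalar equation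
   S' = S ((r - n) - p S / (h (B + I)) - e B), in which the infected/healthy
   exchange terms cancel.  Once B + I > 0, B >= 0 and S >= 0 are known along the
   trajectory, the bracket is at most r - n < 0, so S(t) e^((n - r) t) is
   nonincreasing and S(t) <= S(0) e^(-(n - r) t) -> 0.  Positivity of B and S
   comes from the fact that a solution of X' = k X keeps the sign of X(0). *)

(* Solutions are only meaningful on [0, +oo); freezing them at their value at 0
   for t < 0 turns one-sided continuity at 0 into the two-sided [continuity_pt]
   that the intermediate value and mean value theorems of the library require. *)
Definition extend0 (f : R -> R) (t : R) : R := f (Rmax 0 t).

Lemma extend0_eq f t : 0 <= t -> extend0 f t = f t.
Proof. intros Ht; unfold extend0; now rewrite Rmax_right. Qed.

Lemma continuity_pt_extend0 f :
  right_cont0 f -> (forall t, 0 < t -> continuity_pt f t) ->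
  forall t, 0 <= t -> continuity_pt (extend0 f) t.
Proof.
  intros Hf0 Hf t Ht eps Heps.
  unfold dist; simpl; unfold R_dist.
  destruct (Rle_lt_or_eq_dec _ _ Ht) as [Htpos | <-].
  - destruct (Hf t Htpos eps Heps) as [d [Hd Hclose]].
    exists (Rmin d t); split; [now apply Rmin_pos |].
    intros x [_ Hx]; simpl in Hx; unfold R_dist in Hx.
    pose proof (Rmin_l d t); pose proof (Rmin_r d t).
    apply Rabs_def2 in Hx as Hx'.
    rewrite !extend0_eq by lra.
    destruct (Req_dec x t) as [-> | Hxt].
    + rewrite Rminus_diag, Rabs_R0; lra.
    + apply Hclose; split; [split; [exact I | auto] |].
      simpl; unfold R_dist; apply Rabs_def1; lra.
  - destruct (Hf0 eps Heps) as [d [Hd Hclose]].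
    exists d; split; [exact Hd |].
    intros x [_ Hx]; simpl in Hx; unfold R_dist in Hx.
    rewrite Rminus_0_r in Hx; apply Rabs_def2 in Hx.
    rewrite (extend0_eq f 0) by lra; unfold extend0.
    destruct (Rle_dec x 0).
    + rewrite Rmax_left, Rminus_diag, Rabs_R0 by lra; exact Heps.
    + rewrite Rmax_right by lra; apply Hclose; lra.
Qed.

Lemma continuity_pt_extend0_of_derivable f f' :
  right_cont0 f -> (forall t, 0 < t -> derivable_pt_lim f t (f' t)) ->
  forall t, 0 <= t -> continuity_pt (extend0 f) t.
Proof.
  intros Hf0 Hf'; apply continuity_pt_extend0; [exact Hf0 |].
  intros t Ht; apply derivable_continuous_pt; exists (f' t); exact (Hf' t Ht).
Qed.

Lemma derivable_pt_lim_extend0 f t l :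
  0 < t -> derivable_pt_lim f t l -> derivable_pt_lim (extend0 f) t l.
Proof.
  intros Ht Hf eps Heps.
  destruct (Hf eps Heps) as [d Hd].
  assert (Hpos : 0 < Rmin d t) by (apply Rmin_pos; [apply cond_pos | exact Ht]).
  exists (mkposreal _ Hpos); simpl; intros k Hk0 Hk.
  pose proof (Rmin_l d t); pose proof (Rmin_r d t).
  apply Rabs_def2 in Hk as Hk'.
  rewrite !extend0_eq by lra.
  apply Hd; [exact Hk0 | lra].
Qed.

Lemma derivable_pt_lim_exp_scal c x :
  derivable_pt_lim (fun y => exp (c * y)) x (c * exp (c * x)).
Proof.
  assert (Hlin := derivable_pt_lim_scal id c x 1 (derivable_pt_lim_id x)).
  rewrite Rmult_1_r in Hlin.
  rewrite Rmult_comm.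
  exact (derivable_pt_lim_comp (fun y => c * y) exp x c _ Hlin (derivable_pt_lim_exp _)).
Qed.

Lemma nonincreasing_of_derive_nonpos F F' a b :
  a <= b ->
  (forall x, a < x < b -> derivable_pt_lim F x (F' x)) ->
  (forall x, a < x < b -> F' x <= 0) ->
  (forall x, a <= x <= b -> continuity_pt F x) ->
  F b <= F a.
Proof.
  intros Hab HF' Hneg HF.
  destruct (Rle_lt_or_eq_dec _ _ Hab) as [Hlt | <-]; [| lra].
  destruct (MVT F id a b (fun c Hc => exist _ (F' c) (HF' c Hc))
              (fun c _ => derivable_pt_id c) Hlt HF
              (fun c _ => derivable_continuous_pt _ _ (derivable_pt_id c)))
    as [c [Hc Hmvt]].
  rewrite derive_pt_id in Hmvt; simpl in Hmvt.
  assert (F' c <= 0) by (apply Hneg; exact Hc); unfold id in Hmvt; nra.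
Qed.

Lemma pos_of_nonvanishing f T :
  (forall t, 0 <= t -> continuity_pt f t) -> 0 < f 0 ->
  (forall t, 0 <= t <= T -> f t <> 0) ->
  forall t, 0 <= t <= T -> 0 < f t.
Proof.
  intros Hf H0 Hnz t Ht.
  destruct (Rle_lt_or_eq_dec 0 t (proj1 Ht)) as [Htpos | <-]; [| exact H0].
  destruct (Rtotal_order (f t) 0) as [Hneg | [Hzero | Hpos]];
    [exfalso | now exfalso; apply (Hnz t) | exact Hpos].
  destruct (Ranalysis5.IVT_interv (fun x => - f x) 0 t) as [z [Hz Hfz]];
    [intros x Hx; apply continuity_pt_opp, Hf; lra | exact Htpos | lra | lra |].
  apply (Hnz z); lra.
Qed.

(* If X t < 0, then X^2 e^(-2 K u) is nonincreasing on [0, t] for a bound K of |k|,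
   so X has no zero on [0, t] although it changes sign there. *)
Lemma nonneg_of_linear_ode X k :
  (forall u, 0 <= u -> continuity_pt X u) ->
  (forall u, 0 <= u -> continuity_pt k u) ->
  (forall u, 0 < u -> derivable_pt_lim X u (X u * k u)) ->
  0 <= X 0 -> forall t, 0 <= t -> 0 <= X t.
Proof.
  intros HX Hk HX' HX0 t Ht.
  destruct (Rle_or_lt 0 (X t)) as [| Hneg]; [assumption | exfalso].
  destruct (continuity_ab_maj (fun u => Rabs (k u)) 0 t Ht) as [umax [Hmax _]].
  { intros u Hu; apply (continuity_pt_comp k Rabs), Rcontinuity_abs; apply Hk; lra. }
  set (K := Rabs (k umax)).
  set (V := fun u => X u * X u * exp (-2 * K * u)).
  assert (HV : forall u, 0 <= u <= t -> V t <= V u).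
  { intros u Hu.
    apply (nonincreasing_of_derive_nonpos V
             (fun x => 2 * (k x - K) * (X x * X x * exp (-2 * K * x)))); [lra | | |].
    - intros x Hx; unfold V.
      assert (HXx := HX' x ltac:(lra)).
      replace (2 * (k x - K) * (X x * X x * exp (-2 * K * x)))
        with ((X x * k x * X x + X x * (X x * k x)) * exp (-2 * K * x)
              + X x * X x * (-2 * K * exp (-2 * K * x))) by ring.
      apply (derivable_pt_lim_mult (fun y => X y * X y) (fun y => exp (-2 * K * y))).
      + exact (derivable_pt_lim_mult X X x _ _ HXx HXx).
      + apply derivable_pt_lim_exp_scal.
    - intros x Hx.
      assert (k x <= K) by (eapply Rle_trans; [apply Rle_abs | apply Hmax; lra]).
      assert (0 <= X x * X x * exp (-2 * K * x))
        by (apply Rmult_le_pos; [nra | apply Rlt_le, exp_pos]).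
      nra.
    - intros x Hx; unfold V.
      assert (HXx := HX x ltac:(lra)); reg. }
  assert (Hnz : forall u, 0 <= u <= t -> X u <> 0).
  { intros u Hu Hzero; specialize (HV u Hu); unfold V in HV.
    rewrite Hzero, !Rmult_0_l in HV.
    assert (HXt2 : 0 < X t * X t) by nra.
    pose proof (Rmult_lt_0_compat _ _ HXt2 (exp_pos (-2 * K * t))); lra. }
  assert (HX0pos : 0 < X 0).
  { destruct HX0 as [| HX0]; [assumption |].
    exfalso; apply (Hnz 0); [lra | now symmetry]. }
  pose proof (pos_of_nonvanishing X t HX HX0pos Hnz t ltac:(lra)); lra.
Qed.

Lemma eventually_small_of_exp_bound S c S0 :
  0 < c -> (forall t, 0 <= t -> 0 <= S t) ->
  (forall t, 0 <= t -> S t * exp (c * t) <= S0) ->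
  forall eps, 0 < eps -> exists T, forall t, T <= t -> Rabs (S t) < eps.
Proof.
  intros Hc HS Hbound eps Heps.
  exists (Rmax 0 (S0 / (eps * c))); intros t Ht.
  pose proof (Rmax_l 0 (S0 / (eps * c))) as HT0.
  pose proof (Rmax_r 0 (S0 / (eps * c))) as HT.
  assert (Ht0 : 0 <= t) by lra.
  specialize (HS t Ht0); specialize (Hbound t Ht0).
  rewrite Rabs_right by lra.
  assert (Hlin : S t * (1 + c * t) <= S0).
  { eapply Rle_trans; [| exact Hbound].
    apply Rmult_le_compat_l; [exact HS | apply exp_ineq1_le]. }
  assert (HS0 : S0 <= eps * c * t).
  { replace S0 with (eps * c * (S0 / (eps * c))) by (field; lra).
    apply Rmult_le_compat_l; nra. }
  destruct (Rlt_or_le (S t) eps) as [| Hge]; [assumption | exfalso].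
  assert (eps * (1 + c * t) <= S t * (1 + c * t))
    by (apply Rmult_le_compat_r; nra).
  lra.
Qed.

Section MiteDecay.

Variables b lam gam m r n p h beta delta e : R.
Hypotheses (Hp : 0 <= p) (Hh : 0 < h) (He : 0 <= e).

Variables B I M N : R -> R.
Hypotheses (HB : forall t, 0 <= t -> continuity_pt B t)
           (HI : forall t, 0 <= t -> continuity_pt I t)
           (HM : forall t, 0 <= t -> continuity_pt M t)
           (HN : forall t, 0 <= t -> continuity_pt N t).
Hypotheses
  (HB' : forall t, 0 < t -> derivable_pt_lim B t (fB b lam gam m (B t) (I t) (M t) (N t)))
  (HM' : forall t, 0 < t ->
     derivable_pt_lim M t (fM r n p h beta delta e (B t) (I t) (M t) (N t)))
  (HN' : forall t, 0 < t ->
     derivable_pt_lim N t (fN n p h beta delta e (B t) (I t) (M t) (N t))).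
Hypothesis Hbees_neq0 : forall t, 0 <= t -> B t + I t <> 0.
Hypotheses (HB0 : 0 <= B 0) (HI0 : 0 <= I 0) (Hmites0 : 0 <= M 0 + N 0).

Lemma total_bees_pos t : 0 <= t -> 0 < B t + I t.
Proof.
  intros Ht.
  apply (pos_of_nonvanishing (fun u => B u + I u) t); [| | | lra].
  - intros u Hu; apply continuity_pt_plus; auto.
  - specialize (Hbees_neq0 0 (Rle_refl 0)); lra.
  - intros u Hu; apply Hbees_neq0; lra.
Qed.

Lemma healthy_bees_nonneg t : 0 <= t -> 0 <= B t.
Proof.
  apply (nonneg_of_linear_ode B
           (fun u => b / (B u + I u) - lam * N u - gam * I u - m)); auto.
  - intros u Hu.
    assert (HBu := HB u Hu); assert (HIu := HI u Hu); assert (HNu := HN u Hu).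
    assert (Hbees := total_bees_pos u Hu).
    apply continuity_pt_minus; [| reg].
    apply continuity_pt_minus; [| reg].
    apply continuity_pt_minus; [| reg].
    apply continuity_pt_div; [reg | reg | lra].
  - intros u Hu.
    assert (Hbees := total_bees_pos u (Rlt_le _ _ Hu)).
    replace (B u * _) with (fB b lam gam m (B u) (I u) (M u) (N u))
      by (unfold fB; field; lra).
    exact (HB' u Hu).
Qed.

Let mite_rate t :=
  (r - n) - p * (M t + N t) / (h * (B t + I t)) - e * B t.

(* The exchange terms beta M I, delta M N and e N B cancel in M' + N'. *)
Lemma total_mites_deriv t : 0 < t ->
  derivable_pt_lim (fun u => M u + N u) t ((M t + N t) * mite_rate t).
Proof.
  intros Ht.
  assert (Hbees := total_bees_pos t (Rlt_le _ _ Ht)).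
  replace ((M t + N t) * mite_rate t)
    with (fM r n p h beta delta e (B t) (I t) (M t) (N t)
          + fN n p h beta delta e (B t) (I t) (M t) (N t))
    by (unfold mite_rate, fM, fN; field; nra).
  exact (derivable_pt_lim_plus M N t _ _ (HM' t Ht) (HN' t Ht)).
Qed.

Lemma total_mites_nonneg t : 0 <= t -> 0 <= M t + N t.
Proof.
  apply (nonneg_of_linear_ode (fun u => M u + N u) mite_rate); auto.
  - intros u Hu; apply continuity_pt_plus; auto.
  - intros u Hu; unfold mite_rate.
    assert (HBu := HB u Hu); assert (HIu := HI u Hu).
    assert (HMu := HM u Hu); assert (HNu := HN u Hu).
    assert (Hbees := total_bees_pos u Hu).
    reg; nra.
  - exact total_mites_deriv.
Qed.

Lemma mite_rate_le t : 0 <= t -> mite_rate t <= r - n.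
Proof.
  intros Ht; unfold mite_rate.
  assert (Hbees := total_bees_pos t Ht).
  assert (Hmites := total_mites_nonneg t Ht).
  assert (HBt := healthy_bees_nonneg t Ht).
  assert (0 <= p * (M t + N t) / (h * (B t + I t))).
  { apply Rmult_le_pos; [nra | apply Rlt_le, Rinv_0_lt_compat; nra]. }
  nra.
Qed.

Lemma total_mites_exp_bound t : 0 <= t ->
  (M t + N t) * exp ((n - r) * t) <= M 0 + N 0.
Proof.
  intros Ht.
  replace (M 0 + N 0) with ((M 0 + N 0) * exp ((n - r) * 0))
    by (rewrite Rmult_0_r, exp_0; ring).
  apply (nonincreasing_of_derive_nonpos
           (fun u => (M u + N u) * exp ((n - r) * u))
           (fun u => (mite_rate u + (n - r)) * ((M u + N u) * exp ((n - r) * u))));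
    [exact Ht | | |].
  - intros x Hx.
    replace ((mite_rate x + (n - r)) * ((M x + N x) * exp ((n - r) * x)))
      with ((M x + N x) * mite_rate x * exp ((n - r) * x)
            + (M x + N x) * ((n - r) * exp ((n - r) * x))) by ring.
    apply (derivable_pt_lim_mult (fun u => M u + N u) (fun u => exp ((n - r) * u))).
    + apply total_mites_deriv; lra.
    + apply derivable_pt_lim_exp_scal.
  - intros x Hx.
    assert (Hrate := mite_rate_le x ltac:(lra)).
    assert (0 <= (M x + N x) * exp ((n - r) * x)).
    { apply Rmult_le_pos; [apply total_mites_nonneg; lra | apply Rlt_le, exp_pos]. }
    nra.
  - intros x Hx.
    assert (HMx := HM x ltac:(lra)); assert (HNx := HN x ltac:(lra)); reg.
Qed.

End MiteDecay.

Lemma solution_total_mites_bound (b lam gam m mu r n p h beta delta e : R)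
  (B I M N : R -> R) :
  0 <= p -> 0 < h -> 0 <= e ->
  is_solution_S b lam gam m mu r n p h beta delta e B I M N ->
  in_D0 (B 0) (I 0) (M 0) (N 0) ->
  forall t, 0 <= t ->
  0 <= M t + N t /\ (M t + N t) * exp ((n - r) * t) <= M 0 + N 0.
Proof.
  intros Hp Hh He [Hbees_neq0 [Hderiv [HB0 [HI0 [HM0 HN0]]]]]
         [HBinit [HIinit [HMinit [HNinit _]]]] t Ht.
  assert (HB := continuity_pt_extend0_of_derivable B _ HB0
                 (fun u Hu => proj1 (Hderiv u Hu))).
  assert (HI := continuity_pt_extend0_of_derivable I _ HI0
                 (fun u Hu => proj1 (proj2 (Hderiv u Hu)))).
  assert (HM := continuity_pt_extend0_of_derivable M _ HM0
                 (fun u Hu => proj1 (proj2 (proj2 (Hderiv u Hu))))).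
  assert (HN := continuity_pt_extend0_of_derivable N _ HN0
                 (fun u Hu => proj2 (proj2 (proj2 (Hderiv u Hu))))).
  assert (HB' : forall u, 0 < u -> derivable_pt_lim (extend0 B) u
             (fB b lam gam m (extend0 B u) (extend0 I u) (extend0 M u) (extend0 N u)))
    by (intros u Hu; rewrite !(extend0_eq _ u) by lra;
        apply derivable_pt_lim_extend0, Hderiv; exact Hu).
  assert (HM' : forall u, 0 < u -> derivable_pt_lim (extend0 M) u
             (fM r n p h beta delta e (extend0 B u) (extend0 I u) (extend0 M u) (extend0 N u)))
    by (intros u Hu; rewrite !(extend0_eq _ u) by lra;
        apply derivable_pt_lim_extend0, Hderiv; exact Hu).
  assert (HN' : forall u, 0 < u -> derivable_pt_lim (extend0 N) u
             (fN n p h beta delta e (extend0 B u) (extend0 I u) (extend0 M u) (extend0 N u)))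
    by (intros u Hu; rewrite !(extend0_eq _ u) by lra;
        apply derivable_pt_lim_extend0, Hderiv; exact Hu).
  assert (Hbees : forall u, 0 <= u -> extend0 B u + extend0 I u <> 0)
    by (intros u Hu; rewrite !extend0_eq by lra; auto).
  rewrite <- (extend0_eq B 0) in HBinit by lra.
  rewrite <- (extend0_eq I 0) in HIinit by lra.
  rewrite <- (extend0_eq M 0), <- (extend0_eq N 0) in * by lra.
  rewrite <- (extend0_eq M t), <- (extend0_eq N t) by lra.
  split.
  - apply (total_mites_nonneg r n p h beta delta e Hh (extend0 B) (extend0 I));
      auto; lra.
  - apply (total_mites_exp_bound b lam gam m r n p h beta delta e)
      with (B := extend0 B) (I := extend0 I); auto; lra.
Qed.

Theorem mainTheorem2 (b lam gam m mu r n p h beta delta e : R)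
  (Hb : 0 < b) (Hlam : 0 < lam) (Hgam : 0 < gam) (Hm : 0 < m) (Hmu : 0 < mu)
  (Hr : 0 < r) (Hn : 0 < n) (Hp : 0 < p) (Hh : 0 < h) (Hbeta : 0 < beta)
  (Hdelta : 0 < delta) (He : 0 < e)
  (Hrn : r < n)
  (B I M N : R -> R)
  (Hsol : is_solution_S b lam gam m mu r n p h beta delta e B I M N)
  (Hinit : in_D0 (B 0) (I 0) (M 0) (N 0)) :
  forall eps, 0 < eps -> exists T, forall t, T <= t -> Rabs (M t + N t) < eps.
Proof.
  assert (Hbound := solution_total_mites_bound b lam gam m mu r n p h beta delta e
                      B I M N ltac:(lra) Hh ltac:(lra) Hsol Hinit).
  apply (eventually_small_of_exp_bound (fun t => M t + N t) (n - r) (M 0 + N 0));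
    [lra | apply Hbound | apply Hbound].
Qed.
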